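(* Let $w\in S_n$ and $1\le i<j<k<\ell\le n$ with $w_\ell<w_j<w_k<w_i$. Define $\tau\in S_n$ by $\tau_m=w_m$ for $m\notin\{j,k\}$, $\tau_j=w_k$, $\tau_k=w_j$. Let $x\in\mathfrak{sl}_n(\mathbb C)$ and let $H\subseteq\mathfrak{sl}_n(\mathbb C)$ be a Hessenberg space. If the Schubert cell $C_{w^{-1}}$ is contained in the adjoint Hessenberg variety $\mathcal B(x,H)$, then $\dot\tau^{-1}B\in\mathcal B(x,H)$.
   Context: $G=SL_n(\mathbb C)$, $B$ the upper triangular matrices in $G$, $\mathfrak b$ its Lie algebra. Permutations are written in one-line notation $w=[w_1\cdots w_n]$ with $w_i=w(i)$; $\dot w$ denotes a scalar multiple of the permutation matrix sending $e_i\mapsto e_{w(i)}$ lying in $G$. $C_w=B\dot wB/B\subseteq G/B$. A Hessenberg space is a subspace $H\subseteq\mathfrak{sl}_n(\mathbb C)$ with $[\mathfrak b,H]\subseteq H$; for $x\in\mathfrak{sl}_n(\mathbb C)$, $\mathcal B(x,H)=\{gB\in G/B: g^{-1}xg\in H\}$. *)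

From HB Require Import structures.
From mathcomp Require Import all_boot all_order all_algebra all_fingroup.
From mathcomp Require Import complex.
From mathcomp Require Import Rstruct.
Set Implicit Arguments. Unset Strict Implicit. Unset Printing Implicit Defensive.
Import Order.TTheory GRing.Theory Num.Theory.
Local Open Scope ring_scope.

Notation C := (complex Rdefinitions.R).

Section Defs.
Variable n : nat.

Definition upper (A : 'M[C]_n) : Prop := forall i j : 'I_n, (j < i)%N -> A i j = 0.

Definition in_SL (g : 'M[C]_n) : Prop := \det g = 1.

Definition in_B (g : 'M[C]_n) : Prop := in_SL g /\ upper g.

Definition in_sl (X : 'M[C]_n) : Prop := \tr X = 0.

Definition in_b (X : 'M[C]_n) : Prop := in_sl X /\ upper X.

Definition hessenberg_space (H : {vspace 'M[C]_n}) : Prop :=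
  (forall h, h \in H -> in_sl h) /\
  (forall X h, in_b X -> h \in H -> X *m h - h *m X \in H).

(* gB \in B(x,H), for g in G: g^{-1} x g \in H *)
Definition in_BxH (x : 'M[C]_n) (H : {vspace 'M[C]_n}) (g : 'M[C]_n) : Prop :=
  in_SL g /\ invmx g *m x *m g \in H.

(* permutation matrix sending e_i to e_{w(i)} (column vectors): entry (a,b) = [w b = a] *)
Definition pmat (w : 'S_n) : 'M[C]_n := \matrix_(a, b) (w b == a)%:R.

Definition is_dot (w : 'S_n) (wd : 'M[C]_n) : Prop :=
  in_SL wd /\ exists c : C, wd = c *: pmat w.

End Defs.

From HB Require Import structures.
From mathcomp Require Import all_boot all_order all_algebra all_fingroup.
From mathcomp Require Import complex Rstruct ring zify.
Import Order.TTheory GRing.Theory Num.Theory.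
Local Open Scope ring_scope.
Set Implicit Arguments. Unset Strict Implicit.

(** [conjp w y] is the conjugate of [y] by the permutation matrix of [w]; it
  sends [E_pq] to [E_(w p)(w q)].  Call [y] good if [conjp w (b^-1 y b)] lies in
  [H] for every [b] in [B]; the hypothesis says that [x] is good.  Good
  matrices form a [B]-stable subspace: conjugating by [1 +- E_pq] shows that it
  is stable under [ad E_pq] for [p < q], and conjugating by diagonal matrices
  separates weight spaces, so each off-diagonal component [x_pq E_pq] of [x] is
  good, hence so is its diagonal part.  [H] is stable under [ad E_pq] for
  [p < q] as well, and these brackets move a matrix unit up or to the right.
  An off-diagonal component is moved inside the good space to some [E_ab], and
  then [E_(w a)(w b)] is moved inside [H] to [E_(tau p)(tau q)]; the pattern
  [w_l < w_j < w_k < w_i] is what makes such moves available, through [E_il].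
  Under [tau] the diagonal part [D] changes only by
  [(d_k - d_j) (E_(w j)(w j) - E_(w k)(w k))], the bracket of [E_(w j)(w k)]
  with [(d_k - d_j) E_(w k)(w j)], which comes from the good matrix
  [[E_jk, D] = (d_k - d_j) E_jk], again through [E_il]. *)

Local Ltac rewrite_neqs := repeat match goal with
  | h : is_true (?a != ?b) |- context [?a == ?b] => rewrite (negbTE h)
  | h : is_true (?a != ?b) |- context [?b == ?a] => rewrite [b == a]eq_sym (negbTE h)
  end.

Section Matrices.
Variable n : nat.
Implicit Types (A B y : 'M[C]_n) (p q : 'I_n).
Local Notation E := (@delta_mx C n n).

Lemma mulmx1_invmx A B : A *m B = 1%:M -> invmx A = B.
Proof.
by move=> AB; have [uA _] := mulmx1_unit AB; rewrite -[RHS](mulKmx uA) AB mulmx1.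
Qed.

Lemma invmxM A B : A \in unitmx -> B \in unitmx ->
  invmx (A *m B) = invmx B *m invmx A.
Proof.
by move=> uA uB; apply: mulmx1_invmx; rewrite mulmxA mulmxK // mulmxV.
Qed.

Lemma upperM A B : upper A -> upper B -> upper (A *m B).
Proof.
move=> uA uB r c cr; rewrite !mxE big1 // => m _.
have [mr|rm] := ltnP m r; first by rewrite uA // mul0r.
by rewrite uB ?mulr0 // (leq_trans cr rm).
Qed.

Lemma upper_det A : upper A -> \det A = \prod_r A r r.
Proof.
move=> uA; rewrite -det_tr det_trig; first by apply: eq_bigr => r _; rewrite mxE.
by apply/is_trig_mxP => r s rs; rewrite mxE uA.
Qed.

Lemma in_SL_unitmx A : in_SL A -> A \in unitmx.
Proof. by rewrite /in_SL unitmxE => ->; rewrite unitr1. Qed.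

Lemma in_B1 : in_B (1%:M : 'M[C]_n).
Proof.
split; first by rewrite /in_SL det1.
by move=> r s sr; rewrite mxE -val_eqE (gtn_eqF sr).
Qed.

Lemma in_BM A B : in_B A -> in_B B -> in_B (A *m B).
Proof.
move=> [dA uA] [dB uB]; split; last exact: upperM.
by rewrite /in_SL det_mulmx dA dB mulr1.
Qed.

Lemma in_B_unipotent p q c : (p < q)%N -> in_B (1%:M + c *: E p q).
Proof.
move=> pq; have uU : upper (1%:M + c *: E p q).
  move=> r s sr; rewrite !mxE -val_eqE (gtn_eqF sr) add0r.
  have [rp|_] := eqVneq r p; have [sq|_] := eqVneq s q; rewrite ?mulr0 //.
  by move: sr; rewrite rp sq ltnNge (ltnW pq).
split => //; rewrite /in_SL upper_det // big1 // => r _.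
rewrite !mxE eqxx; have [rp|_] := eqVneq r p; have [rq|_] := eqVneq r q;
  rewrite ?mulr0 ?addr0 //.
by move: pq; rewrite -rp -rq ltnn.
Qed.

Lemma in_B_diag (t : 'rV[C]_n) : \prod_m t 0 m = 1 -> in_B (diag_mx t).
Proof.
move=> t1; split; first by rewrite /in_SL det_diag.
by move=> r s sr; rewrite mxE -val_eqE (gtn_eqF sr) mulr0n.
Qed.

Lemma in_b_delta p q : (p < q)%N -> in_b (E p q).
Proof.
move=> pq; split.
  rewrite /in_sl /mxtrace big1 // => r _; rewrite mxE.
  by have [->|] //= := eqVneq r p; rewrite -val_eqE (ltn_eqF pq).
move=> r s sr; rewrite mxE; have [rp|] //= := eqVneq r p; have [sq|] //= := eqVneq s q.
by move: sr; rewrite rp sq ltnNge (ltnW pq).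
Qed.

Lemma invmx_diag (t : 'rV[C]_n) : (forall m, t 0 m != 0) ->
  invmx (diag_mx t) = diag_mx (\row_m (t 0 m)^-1).
Proof.
move=> t0; apply: mulmx1_invmx; rewrite mulmx_diag.
by apply/matrixP => r s; rewrite !mxE mulfV.
Qed.

Lemma conj_diag_mx (t : 'rV[C]_n) y : (forall m, t 0 m != 0) ->
  invmx (diag_mx t) *m y *m diag_mx t = \matrix_(r, s) (t 0 s / t 0 r * y r s).
Proof.
move=> t0; rewrite invmx_diag // mul_diag_mx mul_mx_diag.
by apply/matrixP => r s; rewrite !mxE mulrC mulrA.
Qed.

Lemma conj_unipotent_sub (N y : 'M[C]_n) :
  (1%:M + N) *m y *m (1%:M - N) - (1%:M - N) *m y *m (1%:M + N) =
  2%:R *: (N *m y - y *m N).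
Proof.
rewrite !(mulmxDl, mulmxBl, mulmxDr, mulmxBr) !(mul1mx, mulmx1) !(mulNmx, mulmxN).
by apply/matrixP => r s; rewrite !mxE; ring.
Qed.

Lemma invmx_unipotent p q c : p != q ->
  invmx (1%:M + c *: E p q) = 1%:M - c *: E p q.
Proof.
move=> pq; apply: mulmx1_invmx.
have EE : c *: E p q *m (c *: E p q) = 0.
  by rewrite -scalemxAl -scalemxAr mul_delta_mx_0 ?scaler0 // eq_sym.
by rewrite mulmxBr !mulmxDl !mul1mx mulmx1 EE addr0 addrK.
Qed.

Definition conjp (w : 'S_n) A := pmat w *m A *m (pmat w)^T.

Lemma pmatE (w : 'S_n) : pmat w = perm_mx w^-1.
Proof. by apply/matrixP => r s; rewrite !mxE (canF_eq (permKV w)) eq_sym. Qed.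

Lemma trmx_pmat (w : 'S_n) : (pmat w)^T = pmat w^-1.
Proof. by rewrite !pmatE tr_perm_mx. Qed.

Fact conjp_is_semilinear w : semilinear (conjp w).
Proof.
by split=> [c A|A B]; rewrite /conjp ?mulmxDr ?mulmxDl // -scalemxAr -scalemxAl.
Qed.

HB.instance Definition _ w :=
  GRing.isSemilinear.Build C 'M[C]_n 'M[C]_n _ (conjp w) (conjp_is_semilinear w).

Lemma conjp_mxE (w : 'S_n) A r s : conjp w A r s = A ((w^-1)%g r) ((w^-1)%g s).
Proof. by rewrite /conjp trmx_pmat !pmatE -row_permE -col_permE !mxE. Qed.

Lemma conjp_delta (w : 'S_n) a b : conjp w (E a b) = E (w a) (w b).
Proof. by apply/matrixP => r s; rewrite conjp_mxE !mxE !(canF_eq (permKV w)). Qed.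

Lemma conjp_tperm_diag (w : 'S_n) (j k : 'I_n) (d : 'rV[C]_n) : j != k ->
  conjp (tperm j k * w) (diag_mx d) =
  conjp w (diag_mx d) + (d 0 k - d 0 j) *: (E (w j) (w j) - E (w k) (w k)).
Proof.
move=> jk; apply/matrixP => r s; rewrite -[r](permKV w) -[s](permKV w).
move: ((w^-1)%g r) ((w^-1)%g s) => u v; rewrite !(conjp_mxE, mxE) invMg tpermV permM.
rewrite !permM !permK !(inj_eq perm_inj).
have cases (m : 'I_n) : [\/ m = j, m = k | (m != j) && (m != k)].
  by have [|] := eqVneq m j; have [|] := eqVneq m k; constructor; auto.
case: (cases u) => [->|->|/andP[uj uk]]; case: (cases v) => [->|->|/andP[vj vk]];
  by rewrite ?tpermL ?tpermR ?tpermD 1?eq_sym // ?eqxx; rewrite_neqs; rewrite /=; ring.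
Qed.

Lemma pmat_mulmx_tr (w : 'S_n) : pmat w *m (pmat w)^T = 1%:M.
Proof. by rewrite trmx_pmat !pmatE invgK -perm_mxM mulVg perm_mx1. Qed.

Lemma is_dot_scale (w : 'S_n) wd : (0 < n)%N -> is_dot w wd ->
  exists2 c, c != 0 & wd = c *: pmat w.
Proof.
move=> n_gt0 [det1 [c wdE]]; exists c => //; apply/eqP => c0; move: det1.
by rewrite /in_SL wdE c0 detZ expr0n eqn0Ngt n_gt0 mul0r => /eqP; rewrite eq_sym oner_eq0.
Qed.

Lemma invmx_scale_pmat (w : 'S_n) c : c != 0 ->
  invmx (c *: pmat w) = c^-1 *: (pmat w)^T.
Proof.
move=> c0; apply: mulmx1_invmx.
by rewrite -scalemxAr -scalemxAl scalerA mulVf // scale1r pmat_mulmx_tr.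
Qed.

Lemma is_dotV (w : 'S_n) wd : (0 < n)%N -> is_dot w wd -> is_dot w^-1 (invmx wd).
Proof.
move=> n_gt0 dot_wd; split; first by rewrite /in_SL det_inv (proj1 dot_wd) invr1.
have [c c0 ->] := is_dot_scale n_gt0 dot_wd.
by exists c^-1; rewrite invmx_scale_pmat // trmx_pmat.
Qed.

Lemma conjp_dot (w : 'S_n) wd A : (0 < n)%N -> is_dot w wd ->
  wd *m A *m invmx wd = conjp w A.
Proof.
move=> n_gt0 /(is_dot_scale n_gt0)[c c0 ->].
by rewrite invmx_scale_pmat // -scalemxAr -!scalemxAl scalerA mulVf // scale1r.
Qed.

Lemma diag_offdiag_split y :
  y = diag_mx (\row_p y p p) + \sum_p \sum_(q | q != p) y p q *: E p q.
Proof.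
rewrite {1}[y]matrix_sum_delta diag_mx_sum_delta -big_split /=.
by apply: eq_bigr => p _; rewrite (bigD1 p) //= mxE.
Qed.

Lemma ad_delta_diag a b (d : 'rV[C]_n) :
  E a b *m diag_mx d - diag_mx d *m E a b = (d 0 b - d 0 a) *: E a b.
Proof.
apply/matrixP => r s; rewrite mxE mul_mx_diag mxE mul_diag_mx !mxE.
by have [->|] := eqVneq r a; have [->|] := eqVneq s b;
  rewrite /= ?mulr0 ?mul0r ?subr0 //; ring.
Qed.

Definition torus_row p q (u : C) : 'rV[C]_n :=
  \row_m (if m == p then u else if m == q then u^-1 else 1).

Lemma torus_row_neq0 p q u : u != 0 -> forall m, torus_row p q u 0 m != 0.
Proof.
by move=> u0 m; rewrite mxE; do 2![case: ifP => // _]; rewrite ?invr_eq0 ?oner_eq0.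
Qed.

Lemma prod_torus_row p q u : p != q -> u != 0 -> \prod_m torus_row p q u 0 m = 1.
Proof.
move=> pq u0; rewrite (bigD1 p) // (bigD1 q) 1?eq_sym //= big1 ?mulr1.
  by rewrite !mxE eqxx eq_sym (negbTE pq) eqxx mulfV.
by move=> m /andP[mp mq]; rewrite mxE (negbTE mp) (negbTE mq).
Qed.

Section AdStable.
Variable V : 'M[C]_n -> Prop.
Hypothesis VZ : forall c {y}, V y -> V (c *: y).
Hypothesis Vad : forall {p q y}, (p < q)%N -> V y -> V (E p q *m y - y *m E p q).

Lemma ad_stable_row_up (p a b : 'I_n) c : V (c *: E a b) -> (p <= a)%N -> p != b ->
  V (c *: E p b).
Proof.
move=> Vab; rewrite leq_eqVlt => /orP[/eqP/val_inj -> //|pa] pb.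
have := Vad pa Vab; rewrite -scalemxAl -scalemxAr mul_delta_mx.
by rewrite mul_delta_mx_0 ?scaler0 ?subr0 // eq_sym.
Qed.

Lemma ad_stable_col_right (q a b : 'I_n) c : V (c *: E a b) -> (b <= q)%N -> q != a ->
  V (c *: E a q).
Proof.
move=> Vab; rewrite leq_eqVlt => /orP[/eqP/val_inj <- //|bq] qa.
have := Vad bq Vab; rewrite -scalemxAl -scalemxAr mul_delta_mx.
rewrite mul_delta_mx_0 // scaler0 sub0r => /(VZ (-1)).
by rewrite scaleN1r opprK.
Qed.

Lemma ad_stable_up_right (a b a' b' : 'I_n) c : V (c *: E a b) ->
  (a' <= a)%N -> (b <= b')%N -> a' != b' -> (a' != b) || (b' != a) ->
  V (c *: E a' b').
Proof.
move=> Vab aa' bb' ab' /orP[a'b|b'a].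
  by apply: ad_stable_col_right (ad_stable_row_up Vab aa' a'b) bb' _; rewrite eq_sym.
exact: ad_stable_row_up (ad_stable_col_right Vab bb' b'a) aa' ab'.
Qed.

End AdStable.

Section BStable.
Variable V : 'M[C]_n -> Prop.
Hypothesis V0 : V 0.
Hypothesis VD : forall {y z}, V y -> V z -> V (y + z).
Hypothesis VZ : forall c {y}, V y -> V (c *: y).
Hypothesis Vconj : forall {b y}, in_B b -> V y -> V (invmx b *m y *m b).

Lemma B_stableB y z : V y -> V z -> V (y - z).
Proof. by move=> Vy Vz; rewrite -scaleN1r; apply/VD/VZ. Qed.

Lemma B_stable_sum (I : finType) (P : pred I) (F : I -> 'M[C]_n) :
  (forall m, P m -> V (F m)) -> V (\sum_(m | P m) F m).
Proof. by move=> VF; apply: big_ind. Qed.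

Lemma B_stable_ad p q y : (p < q)%N -> V y -> V (E p q *m y - y *m E p q).
Proof.
move=> pq Vy; have npq : p != q by rewrite -val_eqE ltn_eqF.
have conjV c : V ((1%:M - c *: E p q) *m y *m (1%:M + c *: E p q)).
  by rewrite -invmx_unipotent //; apply: Vconj (in_B_unipotent c pq) Vy.
have := VZ (2^-1) (B_stableB (conjV (-1)) (conjV 1)).
by rewrite !scaleN1r opprK scale1r conj_unipotent_sub scalerA mulVf ?scale1r ?pnatr_eq0.
Qed.

Lemma B_stable_weight (t : 'rV[C]_n) a b y :
  (forall m, t 0 m != 0) -> \prod_m t 0 m = 1 -> V y ->
  V (\matrix_(r, s) ((a + b * (t 0 s / t 0 r)) * y r s)).
Proof.
move=> t0 t1 Vy; have := VD (VZ a Vy) (VZ b (Vconj (in_B_diag t1) Vy)).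
rewrite conj_diag_mx //; congr V.
by apply/matrixP => r s; rewrite !mxE; ring.
Qed.

(* The weights [t_s / t_r] of [torus_row p q u u^-1] are [u^-2] at [(p, q)],
  [u^2] at [(q, p)], [u] or [u^-1] at the other entries of rows and columns
  [p] and [q], and [1] elsewhere.  With [u = -1] the factor [(1 + t_s/t_r)/2]
  keeps exactly the entries with both or neither of [r], [s] in [{p, q}]; with
  [u = 2] the factor [4/3 (1 - t_s/t_r)] then kills the diagonal and the
  entries outside [{p, q}], fixes [(p, q)] and scales [(q, p)] by [-4]; the
  third step, with [u = 2] at [p] and [u^-1] at an index [c] outside [{p, q}],
  uses the factor [4/3 - 2/3 t_s/t_r], which is [1] at [(p, q)] and [0] at
  [(q, p)]. *)
Lemma B_stable_entry p q c y : p != q -> c != p -> c != q -> V y ->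
  V (y p q *: E p q).
Proof.
move=> pq cp cq Vy; have pc : p != c by rewrite eq_sym.
have m10 : (-1 : C) != 0 by rewrite oppr_eq0 oner_eq0.
have m20 : (2 : C) != 0 by rewrite pnatr_eq0.
have V1 := B_stable_weight (2^-1) (2^-1) (torus_row_neq0 p q m10)
  (prod_torus_row pq m10) Vy.
have V2 := B_stable_weight (4 / 3) (- (4 / 3)) (torus_row_neq0 p q m20)
  (prod_torus_row pq m20) V1.
have V3 := B_stable_weight (4 / 3) (- (2 / 3)) (torus_row_neq0 p c m20)
  (prod_torus_row pc m20) V2.
match type of V3 with V ?z => suff -> : y p q *: E p q = z by [] end.
apply/matrixP => r s; rewrite !mxE invrN1.
have cases (m : 'I_n) : [\/ m = p, m = q, m = c | [&& m != p, m != q & m != c]].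
  by have [|] := eqVneq m p; have [|] := eqVneq m q; have [|] := eqVneq m c; constructor; auto.
case: (cases r) => [->|->|->|/and3P[rp rq rc]];
case: (cases s) => [->|->|->|/and3P[sp sq sc]];
by rewrite ?eqxx; rewrite_neqs; rewrite /=; field.
Qed.

End BStable.

End Matrices.

Section SwapInsidePattern.
Variables (n : nat) (w : 'S_n) (H : {vspace 'M[C]_n}).
Hypothesis hH : hessenberg_space H.
Local Notation E := (@delta_mx C n n).

Definition good y := forall b, in_B b -> conjp w (invmx b *m y *m b) \in H.

Lemma good0 : good 0.
Proof. by move=> b _; rewrite mulmx0 mul0mx linear0 mem0v. Qed.

Lemma goodD y z : good y -> good z -> good (y + z).
Proof. by move=> gy gz b Bb; rewrite mulmxDr mulmxDl linearD memvD ?gy ?gz. Qed.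

Lemma goodZ c y : good y -> good (c *: y).
Proof. by move=> gy b Bb; rewrite -scalemxAr -scalemxAl linearZ memvZ ?gy. Qed.

Lemma good_conj b y : in_B b -> good y -> good (invmx b *m y *m b).
Proof.
move=> Bb gy b' Bb'.
have -> : invmx b' *m (invmx b *m y *m b) *m b' = invmx (b *m b') *m y *m (b *m b').
  by rewrite invmxM ?(in_SL_unitmx (proj1 Bb)) ?(in_SL_unitmx (proj1 Bb')) ?mulmxA.
exact/gy/in_BM.
Qed.

Lemma good_conjp y : good y -> conjp w y \in H.
Proof. by move=> gy; have := gy _ (in_B1 n); rewrite invmx1 mul1mx mulmx1. Qed.

Lemma hessenberg_ad (p q : 'I_n) h : (p < q)%N -> h \in H ->
  E p q *m h - h *m E p q \in H.
Proof. by move=> pq Hh; apply: hH.2 Hh; apply: in_b_delta. Qed.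

Lemma good_move (p q a b P Q : 'I_n) c : good (c *: E p q) ->
  (a <= p)%N -> (q <= b)%N -> a != b -> (a != q) || (b != p) ->
  (P <= w a)%N -> (w b <= Q)%N -> P != Q -> (P != w b) || (Q != w a) ->
  c *: E P Q \in H.
Proof.
move=> gpq ap qb ab abqp Pa bQ PQ PQab.
have gab := ad_stable_up_right goodZ (B_stable_ad goodD goodZ good_conj)
  gpq ap qb ab abqp.
have := good_conjp gab; rewrite linearZ /= conjp_delta => Hab.
exact: (@ad_stable_up_right _ (fun h => h \in H) (@memvZ _ _ H) (@hessenberg_ad))
  Hab Pa bQ PQ PQab.
Qed.

Lemma eq_ord_nat m (a b : 'I_m) : (a == b) = (nat_of_ord a == nat_of_ord b).
Proof. by []. Qed.

(* Hypotheses and goals may mention [w a] through different [reverse_coercion]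
  wrappers, which [lia] would treat as different atoms. *)
Local Ltac ord_lia := repeat match goal with h : is_true (~~ _) |- _ => move: h end;
  rewrite ?(inj_eq perm_inj) ?eq_ord_nat; unfold reverse_coercion in *; lia.

Section Pattern.
Variables (i j k l : 'I_n).
Hypotheses (hij : (i < j)%N) (hjk : (j < k)%N) (hkl : (k < l)%N).
Hypotheses (hw1 : (w l < w j)%N) (hw2 : (w j < w k)%N) (hw3 : (w k < w i)%N).
Local Notation tau := (tperm j k * w)%g.

Lemma good_diag_tau (d : 'rV[C]_n) : good (diag_mx d) -> conjp tau (diag_mx d) \in H.
Proof.
move=> gD; rewrite conjp_tperm_diag; last by rewrite -val_eqE ltn_eqF.
apply: memvD (good_conjp gD) _.
have gjk := B_stable_ad goodD goodZ good_conj hjk gD; rewrite ad_delta_diag in gjk.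
have Hkj : (d 0 k - d 0 j) *: E (w k) (w j) \in H.
  by apply: (good_move (a := i) (b := l) gjk); ord_lia.
have := hessenberg_ad hw2 Hkj.
by rewrite -scalemxAl -scalemxAr !mul_delta_mx scalerBr.
Qed.

Lemma good_delta_tau p q c : p != q -> good (c *: E p q) ->
  c *: E (tau p) (tau q) \in H.
Proof.
move=> pq gpq; rewrite !permM.
case: (tpermP j k p) => [pj|pk|/eqP pj /eqP pk];
  case: (tpermP j k q) => [qj|qk|/eqP qj /eqP qk]; subst.
- by rewrite eqxx in pq.
- by apply: (good_move (a := i) (b := l) gpq); ord_lia.
- have [qi|qi] := eqVneq q i.
    by subst; apply: (good_move (a := i) (b := l) gpq); ord_lia.
  by apply: (good_move (a := i) (b := q) gpq); ord_lia.
- by apply: (good_move (a := i) (b := l) gpq); ord_lia.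
- by rewrite eqxx in pq.
- by apply: (good_move (a := k) (b := q) gpq); ord_lia.
- by apply: (good_move (a := p) (b := j) gpq); ord_lia.
- have [pl|pl] := eqVneq p l.
    by subst; apply: (good_move (a := i) (b := l) gpq); ord_lia.
  by apply: (good_move (a := p) (b := l) gpq); ord_lia.
- by apply: (good_move (a := p) (b := q) gpq); ord_lia.
Qed.

Lemma exists_third_index p q : exists2 c : 'I_n, c != p & c != q.
Proof.
have [/andP[ip iq]|] := boolP ((i != p) && (i != q)); first by exists i.
have [/andP[jp jq]|] := boolP ((j != p) && (j != q)); first by exists j.
by exists k; ord_lia.
Qed.

Lemma good_tau x : good x -> conjp tau x \in H.
Proof.
move=> gx; pose off := \sum_p \sum_(q | q != p) x p q *: E p q.
have x_split : x = diag_mx (\row_p x p p) + off := diag_offdiag_split x.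
have good_entry p q : p != q -> good (x p q *: E p q).
  move=> pq; have [c cp cq] := exists_third_index p q.
  exact: (B_stable_entry goodD goodZ good_conj pq cp cq gx).
have goff : good off.
  apply: (B_stable_sum good0 goodD) => p _; apply: (B_stable_sum good0 goodD) => q qp.
  by apply: good_entry; rewrite eq_sym.
rewrite x_split linearD; apply: memvD.
  apply: good_diag_tau; have -> : diag_mx (\row_p x p p) = x - off.
    by rewrite {2}x_split addrK.
  exact: (B_stableB goodD goodZ gx goff).
rewrite linear_sum; apply: memv_suml => p _; rewrite linear_sum; apply: memv_suml => q qp.
by rewrite linearZ /= conjp_delta; apply: good_delta_tau (good_entry _ _ _); rewrite eq_sym.
Qed.

End Pattern.

End SwapInsidePattern.

Theorem lemma4p3 (n : nat) (w : 'S_n) (i j k l : 'I_n)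
  (hij : (i < j)%N) (hjk : (j < k)%N) (hkl : (k < l)%N)
  (hw1 : (w l < w j)%N) (hw2 : (w j < w k)%N) (hw3 : (w k < w i)%N)
  (x : 'M[C]_n) (hx : in_sl x)
  (H : {vspace 'M[C]_n}) (hH : hessenberg_space H)
  (wd : 'M[C]_n) (hwd : is_dot (w^-1)%g wd)
  (td : 'M[C]_n) (htd : is_dot (tperm j k * w)%g td) :
  (forall b1 b2 : 'M[C]_n, in_B b1 -> in_B b2 -> in_BxH x H (b1 *m wd *m b2)) ->
  in_BxH x H (invmx td).
Proof.
move=> cell_in_BxH; have n_gt0 : (0 < n)%N := leq_ltn_trans (leq0n i) (ltn_ord i).
have gx : good w H x.
  move=> b Bb; have [_] := cell_in_BxH b 1%:M Bb (in_B1 n).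
  have ub := in_SL_unitmx (proj1 Bb); have uwd := in_SL_unitmx (proj1 hwd).
  rewrite mulmx1 invmxM // !mulmxA.
  have := is_dotV n_gt0 hwd; rewrite invgK => /(conjp_dot (invmx b *m x *m b) n_gt0).
  by rewrite invmxK !mulmxA => ->.
split; first by rewrite /in_SL det_inv (proj1 htd) invr1.
by rewrite invmxK (conjp_dot _ n_gt0 htd); apply: (good_tau hH hij hjk hkl hw1 hw2 hw3).
Qed.
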